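(* The equation $x\cdot y^{-1}+u\cdot v^{-1}=(x\cdot v+u\cdot y)\cdot(y\cdot v)^{-1}$ is derivable in equational logic from $\mathsf{Md}_\bot$.
   Context: The signature has one sort, constants $0,1,\bot$, binary operations $+,\cdot$ and unary operations $-$ and $(\,\cdot\,)^{-1}$; $^{-1}$ binds stronger than $\cdot$, which binds stronger than $+$. $\mathsf{Md}_\bot$ is the set of equations (variables universally quantified): $(x+y)+z=x+(y+z)$; $x+y=y+x$; $x+0=x$; $x+(-x)=0\cdot x$; $(x\cdot y)\cdot z=x\cdot(y\cdot z)$; $x\cdot y=y\cdot x$; $1\cdot x=x$; $x\cdot(y+z)=x\cdot y+x\cdot z$; $-(-x)=x$; $0\cdot(x\cdot x)=0\cdot x$; $(x^{-1})^{-1}=x+0\cdot x^{-1}$; $x\cdot x^{-1}=1+0\cdot x^{-1}$; $(x\cdot y)^{-1}=x^{-1}\cdot y^{-1}$; $1^{-1}=1$; $0^{-1}=\bot$; $x+\bot=\bot$; $x\cdot\bot=\bot$. *)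

From Stdlib Require Import List.
Import ListNotations.

Inductive term : Type :=
  | Var  : nat -> term
  | Zero : term
  | One  : term
  | Bot  : term
  | Add  : term -> term -> term
  | Mul  : term -> term -> term
  | Opp  : term -> term
  | Inv  : term -> term.

Fixpoint subst (s : nat -> term) (t : term) : term :=
  match t with
  | Var n => s n
  | Zero => Zero
  | One => One
  | Bot => Bot
  | Add a b => Add (subst s a) (subst s b)
  | Mul a b => Mul (subst s a) (subst s b)
  | Opp a => Opp (subst s a)
  | Inv a => Inv (subst s a)
  end.

Inductive derivable (E : term -> term -> Prop) : term -> term -> Prop :=
  | d_ax    : forall l r, E l r -> derivable E l r
  | d_refl  : forall t, derivable E t t
  | d_sym   : forall s t, derivable E s t -> derivable E t s
  | d_trans : forall s t u, derivable E s t -> derivable E t u -> derivable E s u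
  | d_subst : forall (sg : nat -> term) s t,
      derivable E s t -> derivable E (subst sg s) (subst sg t)
  | d_add   : forall s1 t1 s2 t2, derivable E s1 t1 -> derivable E s2 t2 ->
      derivable E (Add s1 s2) (Add t1 t2)
  | d_mul   : forall s1 t1 s2 t2, derivable E s1 t1 -> derivable E s2 t2 ->
      derivable E (Mul s1 s2) (Mul t1 t2)
  | d_opp   : forall s t, derivable E s t -> derivable E (Opp s) (Opp t)
  | d_inv   : forall s t, derivable E s t -> derivable E (Inv s) (Inv t).

Definition vx := Var 0.
Definition vy := Var 1.
Definition vz := Var 2.

Definition Md_bot_list : list (term * term) := [
  (Add (Add vx vy) vz, Add vx (Add vy vz));
  (Add vx vy, Add vy vx);
  (Add vx Zero, vx);
  (Add vx (Opp vx), Mul Zero vx);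
  (Mul (Mul vx vy) vz, Mul vx (Mul vy vz));
  (Mul vx vy, Mul vy vx);
  (Mul One vx, vx);
  (Mul vx (Add vy vz), Add (Mul vx vy) (Mul vx vz));
  (Opp (Opp vx), vx);
  (Mul Zero (Mul vx vx), Mul Zero vx);
  (Inv (Inv vx), Add vx (Mul Zero (Inv vx)));
  (Mul vx (Inv vx), Add One (Mul Zero (Inv vx)));
  (Inv (Mul vx vy), Mul (Inv vx) (Inv vy));
  (Inv One, One);
  (Inv Zero, Bot);
  (Add vx Bot, Bot);
  (Mul vx Bot, Bot)
].

Definition Md_bot (l r : term) : Prop := In (l, r) Md_bot_list.

(* Unfolding (y v)^-1 = y^-1 v^-1 and distributing, the right-hand side becomes
   (x y^-1)(v v^-1) + (u v^-1)(y y^-1).  By the axiom for x x^-1, multiplying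
   by v v^-1 only adds the defect 0 v^-1 (because 0 (p q) = 0 p + 0 q), and a
   defect 0 b is swallowed by any product a b; so after exchanging the two
   defects between the summands both disappear. *)
From Stdlib Require Import Setoid Morphisms.

Definition eqv := derivable Md_bot.
Infix "==" := eqv (at level 70).

#[local] Instance eqv_equiv : Equivalence eqv.
Proof.
  split; red; unfold eqv; intros.
  - apply d_refl.
  - now apply d_sym.
  - eapply d_trans; eauto.
Qed.

#[local] Instance add_proper : Proper (eqv ==> eqv ==> eqv) Add.
Proof. intros ? ? ? ? ? ?; now apply d_add. Qed.
#[local] Instance mul_proper : Proper (eqv ==> eqv ==> eqv) Mul.
Proof. intros ? ? ? ? ? ?; now apply d_mul. Qed.
#[local] Instance inv_proper : Proper (eqv ==> eqv) Inv.
Proof. intros ? ? ?; now apply d_inv. Qed.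

Definition subst3 (a b c : term) (n : nat) : term :=
  match n with 0 => a | 1 => b | _ => c end.

Lemma Md_bot_inst l r sg : Md_bot l r -> subst sg l == subst sg r.
Proof. intro H; now apply d_subst, d_ax. Qed.

Ltac by_axiom l r a b c :=
  apply (Md_bot_inst l r (subst3 a b c)); unfold Md_bot; simpl; tauto.

Lemma addA a b c : Add (Add a b) c == Add a (Add b c).
Proof. by_axiom (Add (Add vx vy) vz) (Add vx (Add vy vz)) a b c. Qed.
Lemma addC a b : Add a b == Add b a.
Proof. by_axiom (Add vx vy) (Add vy vx) a b a. Qed.
Lemma add0 a : Add a Zero == a.
Proof. by_axiom (Add vx Zero) vx a a a. Qed.
Lemma mulA a b c : Mul (Mul a b) c == Mul a (Mul b c).
Proof. by_axiom (Mul (Mul vx vy) vz) (Mul vx (Mul vy vz)) a b c. Qed.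
Lemma mulC a b : Mul a b == Mul b a.
Proof. by_axiom (Mul vx vy) (Mul vy vx) a b a. Qed.
Lemma mul1 a : Mul One a == a.
Proof. by_axiom (Mul One vx) vx a a a. Qed.
Lemma mulDr a b c : Mul a (Add b c) == Add (Mul a b) (Mul a c).
Proof. by_axiom (Mul vx (Add vy vz)) (Add (Mul vx vy) (Mul vx vz)) a b c. Qed.
Lemma mul0_sqr a : Mul Zero (Mul a a) == Mul Zero a.
Proof. by_axiom (Mul Zero (Mul vx vx)) (Mul Zero vx) a a a. Qed.
Lemma mulV a : Mul a (Inv a) == Add One (Mul Zero (Inv a)).
Proof. by_axiom (Mul vx (Inv vx)) (Add One (Mul Zero (Inv vx))) a a a. Qed.
Lemma invM a b : Inv (Mul a b) == Mul (Inv a) (Inv b).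
Proof. by_axiom (Inv (Mul vx vy)) (Mul (Inv vx) (Inv vy)) a b a. Qed.

Lemma mulDl a b c : Mul (Add a b) c == Add (Mul a c) (Mul b c).
Proof. rewrite mulC, mulDr, (mulC c a), (mulC c b). reflexivity. Qed.

Lemma mulACA a b c d : Mul (Mul a b) (Mul c d) == Mul (Mul a c) (Mul b d).
Proof. rewrite !mulA, <- (mulA b c d), (mulC b c), mulA. reflexivity. Qed.

Lemma addACA a b c d : Add (Add a b) (Add c d) == Add (Add a d) (Add c b).
Proof.
  rewrite !addA, (addC c d), <- (addA b d c), (addC b d), (addA d b c), (addC b c).
  reflexivity.
Qed.

Lemma add_mul0r a b : Add (Mul a b) (Mul Zero b) == Mul a b.
Proof. rewrite <- mulDl, add0. reflexivity. Qed.

Lemma add_mul0 t : Add t (Mul Zero t) == t.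
Proof. rewrite <- (mul1 t) at 1; rewrite add_mul0r, mul1. reflexivity. Qed.

Lemma mul0_idem r : Add (Mul Zero r) (Mul Zero r) == Mul Zero r.
Proof. apply add_mul0r. Qed.

Lemma add_mul0_mul0M p q : Add (Mul Zero p) (Mul Zero (Mul p q)) == Mul Zero (Mul p q).
Proof.
  rewrite <- (mulA Zero p q), (mulC Zero p), (mulA p Zero q), <- mulDr.
  rewrite (addC Zero), add0. reflexivity.
Qed.

(* Squaring [p + q] under [0 *] is what lets the mixed terms [0 (p q)] cancel. *)
Lemma mul0M p q : Mul Zero (Mul p q) == Add (Mul Zero p) (Mul Zero q).
Proof.
  rewrite <- mulDr, <- (mul0_sqr (Add p q)), mulDl, !mulDr, !mul0_sqr.
  rewrite add_mul0_mul0M, (addC (Mul Zero (Mul q p))), add_mul0_mul0M.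
  rewrite (mulC q p), mul0_idem.
  reflexivity.
Qed.

Lemma mul_1add0 t w : Mul t (Add One (Mul Zero w)) == Add t (Mul Zero w).
Proof.
  rewrite mulDr, (mulC t One), mul1, (mulC t), mulA, mul0M.
  rewrite (addC (Mul Zero w)), <- addA, add_mul0.
  reflexivity.
Qed.

Theorem proposition2p2 :
  derivable Md_bot
    (Add (Mul (Var 0) (Inv (Var 1))) (Mul (Var 2) (Inv (Var 3))))
    (Mul (Add (Mul (Var 0) (Var 3)) (Mul (Var 2) (Var 1)))
         (Inv (Mul (Var 1) (Var 3)))).
Proof.
  set (x := Var 0); set (y := Var 1); set (u := Var 2); set (v := Var 3).
  change (Add (Mul x (Inv y)) (Mul u (Inv v))
          == Mul (Add (Mul x v) (Mul u y)) (Inv (Mul y v))).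
  symmetry.
  rewrite invM, mulDl, (mulACA x v), (mulC (Inv y) (Inv v)), (mulACA u y).
  rewrite !mulV, !mul_1add0, addACA, !add_mul0r.
  reflexivity.
Qed.
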